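(* Let $T$ be a non-star tree containing an edge $xy$ with $d_T(x)=1$ and $d_T(y)\ge 3$. Suppose that for every neighbor $y'\ne x$ of $y$, the tree $T_{(y',y)}$ is a neighbor $F$-tree of $y$ which is not a single vertex (i.e. not isomorphic to $P_1$). Then there exists a $(T,x)$-well 2-placement.
   Context: All graphs are finite, simple and undirected; $P_k$ is the path on $k$ vertices. A non-star tree is a tree not isomorphic to a star $K_{1,m}$ for any $m\ge0$. For an edge $ab$ of a tree $T$, $T_{(a,b)}$ denotes the connected component containing $a$ in $T-\{ab\}$; it is a neighbor $F$-tree of $b$ if it is a path with at most $3$ vertices and, when it has exactly $3$ vertices, $a$ is an end vertex of it. A permutation $\sigma$ of $V(T)$ is a 2-placement of $T$ if $\sigma(a)\sigma(b)\notin E(T)$ for every edge $ab\in E(T)$; $\sigma(T)\subseteq T^k$ means $dist_T(\sigma(a),\sigma(b))\le k$ for every edge $ab$ of $T$. A fixed-point-free permutation $\sigma$ of $V(T)$ is a $(T,x)$-well 2-placement if (distances and degrees in $T$): (1) $\sigma$ is a 2-placement of $T$; (2) $\sigma(T)\subseteq T^6$; (3) $dist(x,\sigma(x))\le 2$; (4) $dist(w,\sigma(w))\le 3$ for every neighbor $w$ of $x$; (5) $dist(w,\sigma(w))\le 4$ for every $w$ of degree $1$; (6) every cycle of $\sigma$ (in its disjoint cycle decomposition) has length at most $5$. *)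

From mathcomp Require Import all_boot fingroup perm.
Set Implicit Arguments. Unset Strict Implicit. Unset Printing Implicit Defensive.

Section Graphs.
Variable T : finType.
Implicit Types (e : rel T) (x y a b u v w : T).

Definition simple_graph e := symmetric e /\ irreflexive e.

Definition connected_graph e := forall x y, connect e x y.

Definition acyclic_graph e :=
  forall c : seq T, uniq c -> 3 <= size c -> ~~ path.cycle e c.

Definition is_tree e := [/\ simple_graph e, connected_graph e & acyclic_graph e].

Definition deg e x := #|[set z | e x z]|.

(* the star K_{1,m} on 'I_m.+1 with centre ord0 *)
Definition star_edge m (i j : 'I_m.+1) := (i == ord0) != (j == ord0).

Definition is_star e :=
  exists m (f : T -> 'I_m.+1), bijective f /\ forall u v, e u v = star_edge (f u) (f v).

Definition remove_edge e a b : rel T :=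
  fun u v => e u v && ~~ (((u == a) && (v == b)) || ((u == b) && (v == a))).

Definition subtree e a b : {set T} := [set v | connect (remove_edge e a b) a v].

Definition adj_in (s : seq T) u v :=
  ((u, v) \in zip s (behead s)) || ((v, u) \in zip s (behead s)).

(* T_(a,b) is a path (listed in order by s) with at most 3 vertices, and
   if it has exactly 3 vertices then a is an end vertex *)
Definition neighbor_F_tree e a b :=
  exists s : seq T,
    [/\ uniq s, s =i subtree e a b,
        {in s &, forall u v, e u v = adj_in s u v},
        size s <= 3
      & size s = 3 -> a = head a s \/ a = last a s].

Fixpoint walkn e n x y : bool :=
  if n is n'.+1 then (x == y) || [exists z, e x z && walkn e n' z y] else x == y.

(* graph distance (for connected graphs, the least n with a walk of length n) *)
Definition dist e x y := find (fun n => walkn e n x y) (iota 0 #|T|).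

Definition two_placement e (s : {perm T}) :=
  forall a b, e a b -> ~~ e (s a) (s b).

Definition well_two_placement e x (s : {perm T}) :=
  (forall v, s v != v) /\
  two_placement e s /\
  (forall a b, e a b -> dist e (s a) (s b) <= 6) /\
  dist e x (s x) <= 2 /\
  (forall w, e x w -> dist e w (s w) <= 3) /\
  (forall w, deg e w = 1 -> dist e w (s w) <= 4) /\
  (forall v, #|porbit s v| <= 5).

End Graphs.

From mathcomp Require Import all_boot fingroup perm zify.
Set Implicit Arguments. Unset Strict Implicit. Unset Printing Implicit Defensive.

(* Proof of Lemma 3.8.  Under the hypotheses, the tree is a "spider": a centre
   y carrying the leaf x and, for every other neighbour n of y, a leg which is
   the path n - b n (short leg) or n - b n - c n (long leg).  Every vertex is
   then within distance 3 of y, so every distance bound of a well 2-placement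
   reduces to a bound on the two walks through y.

   The permutation is built leg by leg.  The legs other than one or two
   distinguished ones s1, s2 are matched in pairs {n, p n}; the two legs of a
   pair are permuted among themselves in cycles of length at most 4.  The
   vertices x, y are put in one cycle with the leg s1 when the number of legs
   is odd; otherwise x, y share a cycle with the tail of the leg s1 and the
   vertex s1 shares a cycle with the leg s2.  All cycles have length <= 5. *)

Lemma walkn0 (T : finType) (e : rel T) u : walkn e 0 u u.
Proof. by rewrite /= eqxx. Qed.

Lemma walkn_mono (T : finType) (e : rel T) n m u v :
  n <= m -> walkn e n u v -> walkn e m u v.
Proof.
elim: n m u => [|n IH] [|m] u //=; first by move=> _ ->.
rewrite ltnS => le_nm /orP[-> //|/existsP[z /andP[euz wzv]]].
by apply/orP; right; apply/existsP; exists z; rewrite euz (IH _ _ le_nm wzv).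
Qed.

Lemma walkn_cat (T : finType) (e : rel T) n m u v w :
  walkn e n u v -> walkn e m v w -> walkn e (n + m) u w.
Proof.
elim: n u => [|n IH] u /=; first by move/eqP->.
case/orP=> [/eqP-> wvw|/existsP[z /andP[euz wzv]] wvw].
  by change (walkn e (n.+1 + m) v w); apply: walkn_mono wvw; rewrite leq_addl.
by apply/orP; right; apply/existsP; exists z; rewrite euz (IH _ wzv wvw).
Qed.

Lemma walkn_edge (T : finType) (e : rel T) u v : e u v -> walkn e 1 u v.
Proof. by move=> euv; apply/orP; right; apply/existsP; exists v; rewrite euv /= eqxx. Qed.

Lemma walkn_sym (T : finType) (e : rel T) n u v : symmetric e ->
  walkn e n u v -> walkn e n v u.
Proof.
move=> sym; elim: n u v => [|n IH] u v; first by rewrite /= eq_sym.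
case/orP=> [/eqP->|/existsP[z /andP[euz wzv]]]; first by rewrite /= eqxx.
by rewrite -addn1; apply: walkn_cat (IH _ _ wzv) (walkn_edge _); rewrite sym.
Qed.

Lemma dist_le_walk (T : finType) (e : rel T) n u v : walkn e n u v -> dist e u v <= n.
Proof.
move=> wuv; rewrite /dist; have [n_lt|n_ge] := ltnP n #|T|.
  rewrite leqNgt; apply/negP => lt_n.
  by have := before_find 0 lt_n; rewrite nth_iota ?add0n ?wuv.
by apply: leq_trans (find_size _ _) _; rewrite size_iota.
Qed.

Lemma card_porbit_le (T : finType) (s : {perm T}) v L :
  0 < L -> iter L s v = v -> #|porbit s v| <= L.
Proof.
move=> L_gt0 iterL.
have sub : porbit s v \subset [set z in traject s v L].
  apply/subsetP => z /porbitP[i ->]; rewrite inE permX.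
  have -> : iter i s v = iter (i %% L) s v.
    rewrite {1}(divn_eq i L) addnC iterD; congr iter.
    by elim: (i %/ L) => [|q IH] //; rewrite mulSn iterD IH iterL.
  by apply/trajectP; exists (i %% L); rewrite ?ltn_pmod.
apply: leq_trans (subset_leq_card sub) _.
by rewrite cardsE; apply: leq_trans (card_size _) _; rewrite size_traject.
Qed.

Lemma even_matching (T : finType) (A : {set T}) : ~~ odd #|A| ->
  exists p : T -> T, forall z, z \in A -> [/\ p z \in A, p z != z & p (p z) = z].
Proof.
have [k] := ubnP #|A|; elim: k A => // k IH A ltAk evenA.
have [->|[a aA]] := set_0Vmem A; first by exists id => z; rewrite inE.
have cardA : #|A| = #|A :\ a|.+1 by rewrite (cardsD1 a A) aA.
have [a' a'A] : exists a', a' \in A :\ a.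
  by apply/card_gt0P; move: evenA; rewrite cardA; case: #|A :\ a|.
have cardA' : #|A :\ a| = #|A :\ a :\ a'|.+1 by rewrite (cardsD1 a' (A :\ a)) a'A.
have [p hp] : exists p : T -> T, forall z, z \in A :\ a :\ a' ->
    [/\ p z \in A :\ a :\ a', p z != z & p (p z) = z].
  apply: IH; first by move: ltAk; rewrite cardA cardA'; lia.
  by move: evenA; rewrite cardA cardA' /= !negbK.
move: a'A; rewrite !inE => /andP[a'a a'A].
exists (fun z => if z == a then a' else if z == a' then a else p z) => z zA.
have [->|za] := eqVneq z a; first by rewrite /= a'A (negbTE a'a) eqxx.
have [->|za'] := eqVneq z a'; first by rewrite /= eqxx aA eq_sym a'a.
have [] := hp z; first by rewrite !inE za za'.
by rewrite !inE => /and3P[pza' pza pzA] pzz ppz; rewrite pzA pzz (negbTE pza) (negbTE pza').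
Qed.

Definition special (T : eqType) (single : bool) (s1 s2 n : T) :=
  (n == s1) || (~~ single && (n == s2)).

(* Any set N with at least two elements splits into one or two distinguished
   elements and pairs matched by an involution p ([single] records the parity
   of #|N|). *)
Lemma special_pairing (T : finType) (N : {set T}) : 1 < #|N| ->
  exists single s1 s2 (p : T -> T),
    [/\ s1 \in N, (~~ single -> s2 \in N /\ s2 != s1) &
     forall n, n \in N -> ~~ special single s1 s2 n ->
       [/\ p n \in N, p n != n, p (p n) = n & ~~ special single s1 s2 (p n)]].
Proof.
move=> N2; have [s1 s1N] : exists s1, s1 \in N by apply/card_gt0P; lia.
have cardN : #|N| = #|N :\ s1|.+1 by rewrite (cardsD1 s1 N) s1N.
have [s2 s2N1] : exists s2, s2 \in N :\ s1 by apply/card_gt0P; lia.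
have cardN1 : #|N :\ s1| = #|N :\ s1 :\ s2|.+1 by rewrite (cardsD1 s2) s2N1.
move: (s2N1); rewrite !inE => /andP[s2s1 s2N].
pose single := odd #|N|.
pose A := [set n in N | ~~ special single s1 s2 n].
have evenA : ~~ odd #|A|.
  rewrite /A /special /single; case: (boolP (odd #|N|)) => oddN /=.
    have -> : [set n in N | ~~ ((n == s1) || false)] = N :\ s1.
      by apply/setP => n; rewrite !inE orbF andbC.
    by move: oddN; rewrite cardN.
  have -> : [set n in N | ~~ ((n == s1) || (n == s2))] = N :\ s1 :\ s2.
    by apply/setP => n; rewrite !inE; case: (n == s1); case: (n == s2); case: (n \in N).
  by move: oddN; rewrite cardN cardN1 /= !negbK.
have [p hp] := even_matching evenA.
exists single, s1, s2, p; split => // n nN nS.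
have [] := hp n; first by rewrite inE nN nS.
by rewrite inE => /andP[-> ->] -> ->.
Qed.

Definition leg (T : finType) (b c : T -> T) (t : T -> bool) (n : T) : {set T} :=
  if t n then [set n; b n; c n] else [set n; b n].

Record Spider (T : finType) (e : rel T) (x y : T) (N : {set T})
    (b c : T -> T) (t : T -> bool) : Prop := {
  sp_sym : symmetric e;
  sp_irr : irreflexive e;
  sp_exy : e x y;
  sp_xN : x \notin N;
  sp_yN : forall n, n \in N -> e y n;
  sp_x_leaf : forall w, e x w -> w = y;
  sp_y_nbrs : forall w, e y w -> w = x \/ w \in N;
  sp_leg1 : forall n, n \in N -> e n (b n);
  sp_leg2 : forall n, n \in N -> t n -> e (b n) (c n);
  sp_leg_chord : forall n, n \in N -> t n -> ~~ e n (c n);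
  sp_leg_c : forall n, n \in N -> t n -> c n != n;
  sp_x_notin_leg : forall n, n \in N -> x \notin leg b c t n;
  sp_y_notin_leg : forall n, n \in N -> y \notin leg b c t n;
  sp_legs_disjoint : forall n m v, n \in N -> m \in N ->
    v \in leg b c t n -> v \in leg b c t m -> n = m;
  sp_leg_closed : forall n u w, n \in N -> u \in leg b c t n -> e u w ->
    w \in leg b c t n \/ (u = n /\ w = y);
  sp_cover : forall v,
    [\/ v = x, v = y | exists2 n, n \in N & v \in leg b c t n] }.

Section SpiderFacts.
Variables (T : finType) (e : rel T) (x y : T) (N : {set T}) (b c : T -> T) (t : T -> bool).
Hypothesis S : Spider e x y N b c t.
Local Notation leg := (leg b c t).

Lemma leg_root n : n \in leg n.
Proof. by rewrite /leg; case: (t n); rewrite !inE eqxx. Qed.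
Lemma leg_b n : b n \in leg n.
Proof. by rewrite /leg; case: (t n); rewrite !inE eqxx ?orbT. Qed.
Lemma leg_c n : t n -> c n \in leg n.
Proof. by rewrite /leg => ->; rewrite !inE eqxx ?orbT. Qed.

Lemma legP n v : v \in leg n -> [\/ v = n, v = b n | t n /\ v = c n].
Proof.
rewrite /leg; case: (t n); rewrite !inE.
  by case/orP=> [/orP[]|] /eqP->; [constructor 1|constructor 2|constructor 3].
by case/orP=> /eqP->; [constructor 1|constructor 2].
Qed.

Lemma legs_neq n m u w : n \in N -> m \in N -> n != m ->
  u \in leg n -> w \in leg m -> u != w.
Proof.
move=> nN mN nm un wm; apply: contra nm => /eqP uw; subst w.
by rewrite (sp_legs_disjoint S nN mN un wm).
Qed.

Lemma legs_nonadj n m u w : n \in N -> m \in N -> n != m ->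
  u \in leg n -> w \in leg m -> ~~ e u w.
Proof.
move=> nN mN nm un wm; apply/negP => euw.
case: (sp_leg_closed S nN un euw) => [wn|[_ wy]].
  by move/eqP: nm; apply; exact: (sp_legs_disjoint S nN mN wn wm).
by subst w; move: (sp_y_notin_leg S mN); rewrite wm.
Qed.

Lemma leg_neq_x n v : n \in N -> v \in leg n -> v != x.
Proof. by move=> nN vn; apply: contraNneq (sp_x_notin_leg S nN) => <-. Qed.
Lemma leg_neq_y n v : n \in N -> v \in leg n -> v != y.
Proof. by move=> nN vn; apply: contraNneq (sp_y_notin_leg S nN) => <-. Qed.

Lemma N_neq_x n : n \in N -> n != x.
Proof. by move=> nN; exact: leg_neq_x nN (leg_root n). Qed.
Lemma N_neq_y n : n \in N -> n != y.
Proof. by move=> nN; exact: leg_neq_y nN (leg_root n). Qed.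
Lemma x_neq_y : x != y.
Proof. by apply: contraTneq (sp_exy S) => ->; rewrite (sp_irr S). Qed.

Lemma x_nonadj v : v != y -> ~~ e x v.
Proof. by apply: contra => /(sp_x_leaf S) ->. Qed.
Lemma nonadj_x v : v != y -> ~~ e v x.
Proof. by rewrite (sp_sym S); exact: x_nonadj. Qed.

Lemma b_notin_N n : n \in N -> b n \notin N.
Proof.
move=> nN; apply/negP => bN.
have bn := sp_legs_disjoint S nN bN (leg_b n) (leg_root (b n)).
by move: (sp_irr S n); rewrite {2}bn (sp_leg1 S nN).
Qed.

Lemma y_nonadj_leg n v : n \in N -> v \in leg n -> v \notin N -> ~~ e y v.
Proof.
move=> nN vn vN; apply/negP => /(sp_y_nbrs S) [vx|]; last by rewrite (negbTE vN).
by move: (leg_neq_x nN vn); rewrite vx eqxx.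
Qed.

Lemma b_neq_root n : n \in N -> b n != n.
Proof. by move=> nN; apply: contraTneq (sp_leg1 S nN) => ->; rewrite (sp_irr S). Qed.
Lemma c_neq_b n : n \in N -> t n -> c n != b n.
Proof. by move=> nN tn; apply: contraTneq (sp_leg2 S nN tn) => ->; rewrite (sp_irr S). Qed.

Lemma walk_root n : n \in N -> walkn e 1 n y.
Proof. by move=> nN; apply: walkn_edge; rewrite (sp_sym S) (sp_yN S nN). Qed.
Lemma walk_b n : n \in N -> walkn e 2 (b n) y.
Proof.
by move=> nN; apply: (walkn_cat (n:=1)) (walk_root nN); apply: walkn_edge;
  rewrite (sp_sym S) (sp_leg1 S nN).
Qed.
Lemma walk_c n : n \in N -> t n -> walkn e 3 (c n) y.
Proof.
by move=> nN tn; apply: (walkn_cat (n:=1)) (walk_b nN); apply: walkn_edge;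
  rewrite (sp_sym S) (sp_leg2 S nN tn).
Qed.
Lemma walk_x : walkn e 1 x y.
Proof. exact: walkn_edge (sp_exy S). Qed.

Lemma walk_centre v : walkn e 3 v y.
Proof.
case: (sp_cover S v) => [->|->|[n nN vn]].
- exact: walkn_mono walk_x.
- exact: walkn_mono (walkn0 e y).
case: (legP vn) => [->|->|[tn ->]].
- exact: walkn_mono (walk_root nN).
- exact: walkn_mono (walk_b nN).
- exact: walk_c.
Qed.

Lemma walk_via_centre i j u v : walkn e i u y -> walkn e j v y -> walkn e (i + j) u v.
Proof. by move=> wu wv; apply: walkn_cat wu _; exact: walkn_sym (sp_sym S) wv. Qed.

End SpiderFacts.

Section SpiderPlacement.
Variables (T : finType) (e : rel T) (x y : T) (N : {set T}) (b c : T -> T) (t : T -> bool).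
Hypothesis S : Spider e x y N b c t.
Local Notation leg := (leg b c t).
Variables (single : bool) (s1 s2 : T) (p : T -> T).
Local Notation special := (special single s1 s2).
Hypothesis s1N : s1 \in N.
Hypothesis s2P : ~~ single -> s2 \in N /\ s2 != s1.
Hypothesis pairP : forall n, n \in N -> ~~ special n ->
  [/\ p n \in N, p n != n, p (p n) = n & ~~ special (p n)].

Lemma s2N : ~~ single -> s2 \in N. Proof. by case/s2P. Qed.
Lemma s2_neq_s1 : ~~ single -> s2 != s1. Proof. by case/s2P. Qed.
Lemma s1_neq_s2 : ~~ single -> s1 != s2. Proof. by rewrite eq_sym; exact: s2_neq_s1. Qed.

Lemma leg_role n : [\/ n = s1, ~~ single /\ n = s2 | ~~ special n].
Proof.
rewrite /special; have [->|_] := eqVneq n s1; first by constructor 1.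
case: (boolP single) => [_|one] /=; first by constructor 3.
by have [->|_] := eqVneq n s2; [constructor 2|constructor 3].
Qed.

Lemma nonspecialE n : special n = false ->
  ((n == s1) = false) * ((~~ single && (n == s2)) = false).
Proof. by rewrite /special; case: (n == s1) => //= ->. Qed.

Lemma nonspecial_neq_s1 n : ~~ special n -> n != s1.
Proof. by apply: contra => /eqP->; rewrite /special eqxx. Qed.

Definition leg_of_vertex v := odflt x [pick n in N | v \in leg n].

Lemma leg_of_vertexP n v : n \in N -> v \in leg n -> leg_of_vertex v = n.
Proof.
move=> nN vn; rewrite /leg_of_vertex; case: pickP => [m /andP[mN vm]|/(_ n)].
  by rewrite /= (sp_legs_disjoint S mN nN vm vn).
by rewrite nN vn.
Qed.

(* The vertex closing the cycle of x: s1 if the leg s1 joins that cycle. *)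
Definition close1 := if single then s1 else x.

(* The cycles are
     x -> y -> b s1 [-> c s1] -> close1, and s1 -> x if [single];
     s1 -> s2 [-> c s2] -> b s2 -> s1 otherwise;
   and for a matched pair {n, m = p n}, according to the lengths of the legs:
     long/long   : n <-> c n, m <-> c m, b n <-> b m;
     long/short  : n <-> c n, b n -> m -> b m -> b n;
     short/short : n -> b m -> m -> b n -> n. *)
Definition place_in_leg n v :=
  if n == s1 then
    (if v == n then (if single then x else s2)
     else if v == b n then (if t n then c n else close1) else close1)
  else if ~~ single && (n == s2) then
    (if v == n then (if t n then c n else b n) else if v == b n then s1 else b n)
  else if t n then
    (if v == n then c n else if v == b n then (if t (p n) then b (p n) else p n) else n)
  else if t (p n) then (if v == n then b n else b (p n))
  else (if v == n then b (p n) else n).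

Definition place v :=
  if v == x then y else if v == y then b s1 else place_in_leg (leg_of_vertex v) v.

Lemma place_x : place x = y. Proof. by rewrite /place eqxx. Qed.
Lemma place_y : place y = b s1.
Proof. by rewrite /place eq_sym (negbTE (x_neq_y S)) eqxx. Qed.

Lemma place_leg n v : n \in N -> v \in leg n -> place v = place_in_leg n v.
Proof.
move=> nN vn; rewrite /place (negbTE (leg_neq_x S nN vn)) (negbTE (leg_neq_y S nN vn)).
by rewrite (leg_of_vertexP nN vn).
Qed.

Lemma place_s1 : place s1 = if single then x else s2.
Proof. by rewrite (place_leg s1N (leg_root _ _ _ _)) /place_in_leg !eqxx. Qed.
Lemma place_b1 : place (b s1) = if t s1 then c s1 else close1.
Proof.
by rewrite (place_leg s1N (leg_b _ _ _ _)) /place_in_leg !eqxx (negbTE (b_neq_root S s1N)).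
Qed.
Lemma place_c1 : t s1 -> place (c s1) = close1.
Proof.
move=> ts1; rewrite (place_leg s1N (leg_c _ _ ts1)) /place_in_leg !eqxx.
by rewrite (negbTE (sp_leg_c S s1N ts1)) (negbTE (c_neq_b S s1N ts1)).
Qed.
Lemma place_leg2 v : ~~ single -> v \in leg s2 -> place v =
  if v == s2 then (if t s2 then c s2 else b s2) else if v == b s2 then s1 else b s2.
Proof.
move=> one v2; rewrite (place_leg (s2N one) v2) /place_in_leg.
by rewrite (negbTE (s2_neq_s1 one)) one eqxx.
Qed.
Lemma place_s2 : ~~ single -> place s2 = if t s2 then c s2 else b s2.
Proof. by move=> one; rewrite place_leg2 ?eqxx //; exact: leg_root. Qed.
Lemma place_b2 : ~~ single -> place (b s2) = s1.
Proof.
move=> one; rewrite place_leg2 ?eqxx ?(negbTE (b_neq_root S (s2N one))) //.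
exact: leg_b.
Qed.
Lemma place_c2 : ~~ single -> t s2 -> place (c s2) = b s2.
Proof.
move=> one ts2; rewrite place_leg2 ?(leg_c _ _ ts2) //.
by rewrite (negbTE (sp_leg_c S (s2N one) ts2)) (negbTE (c_neq_b S (s2N one) ts2)).
Qed.

Lemma place_root n : n \in N -> ~~ special n ->
  place n = if t n then c n else if t (p n) then b n else b (p n).
Proof.
move=> nN /negbTE ns; rewrite (place_leg nN (leg_root _ _ _ _)) /place_in_leg.
by rewrite !(nonspecialE ns) !eqxx; case: (t n); case: (t (p n)).
Qed.
Lemma place_pb n : n \in N -> ~~ special n ->
  place (b n) = if t n then (if t (p n) then b (p n) else p n)
                else if t (p n) then b (p n) else n.
Proof.
move=> nN /negbTE ns; rewrite (place_leg nN (leg_b _ _ _ _)) /place_in_leg.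
by rewrite !(nonspecialE ns) !eqxx (negbTE (b_neq_root S nN)); case: (t n); case: (t (p n)).
Qed.
Lemma place_pc n : n \in N -> ~~ special n -> t n -> place (c n) = n.
Proof.
move=> nN /negbTE ns tn; rewrite (place_leg nN (leg_c _ _ tn)) /place_in_leg.
by rewrite !(nonspecialE ns) tn (negbTE (sp_leg_c S nN tn)) (negbTE (c_neq_b S nN tn)).
Qed.

Ltac leg_mem := solve [exact: leg_root | exact: leg_b | (apply: leg_c; assumption)].

(* [place] is a 2-placement: the images of the two ends of an edge lie in
   different legs, or one of them is x and the other is not y. *)
Lemma nonadj_place_xy : ~~ e (place x) (place y).
Proof.
rewrite place_x place_y.
exact: (y_nonadj_leg S s1N (leg_b _ _ _ _) (b_notin_N S s1N)).
Qed.

Lemma nonadj_place_y_root n : n \in N -> ~~ e (place y) (place n).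
Proof.
move=> nN; rewrite place_y; have b1 := leg_b b c t s1.
case: (leg_role n) => [->|[one ->]|ns].
- rewrite place_s1; case: (boolP single) => [_|one].
    exact: (nonadj_x S) (leg_neq_y S s1N b1).
  by apply: (legs_nonadj S s1N (s2N one) (s1_neq_s2 one) b1); leg_mem.
- rewrite place_s2 //; case ts2: (t s2);
    by apply: (legs_nonadj S s1N (s2N one) (s1_neq_s2 one) b1); leg_mem.
have [pN _ _ pns] := pairP nN ns.
have s1n : s1 != n by rewrite eq_sym nonspecial_neq_s1.
have s1p : s1 != p n by rewrite eq_sym nonspecial_neq_s1.
rewrite place_root //; case tn: (t n); last case: (t (p n)).
- by apply: (legs_nonadj S s1N nN s1n b1); leg_mem.
- by apply: (legs_nonadj S s1N nN s1n b1); leg_mem.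
- by apply: (legs_nonadj S s1N pN s1p b1); leg_mem.
Qed.

Lemma nonadj_place_root_b n : n \in N -> ~~ e (place n) (place (b n)).
Proof.
move=> nN; case: (leg_role n) => [->|[one ->]|ns].
- rewrite place_s1 place_b1 /close1; case: (boolP single) => [_|one].
    apply: (x_nonadj S); case ts1: (t s1).
      exact: (leg_neq_y S s1N (leg_c _ _ ts1)).
    exact: (N_neq_y S s1N).
  case ts1: (t s1); last exact: (nonadj_x S) (N_neq_y S (s2N one)).
  by apply: (legs_nonadj S (s2N one) s1N (s2_neq_s1 one)); leg_mem.
- rewrite place_s2 // place_b2 //; case ts2: (t s2);
    by apply: (legs_nonadj S (s2N one) s1N (s2_neq_s1 one)); leg_mem.
have [pN pn _ _] := pairP nN ns; have np : n != p n by rewrite eq_sym.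
rewrite place_root // place_pb //; case tn: (t n); case tp: (t (p n)).
- by apply: (legs_nonadj S nN pN np); leg_mem.
- by apply: (legs_nonadj S nN pN np); leg_mem.
- by apply: (legs_nonadj S nN pN np); leg_mem.
- by apply: (legs_nonadj S pN nN pn); leg_mem.
Qed.

Lemma nonadj_place_b_c n : n \in N -> t n -> ~~ e (place (b n)) (place (c n)).
Proof.
move=> nN tn; case: (leg_role n) => [n_s1|[one n_s2]|ns]; [subst n..|].
- rewrite place_b1 place_c1 // tn /close1; case: (boolP single) => [_|one].
    by rewrite (sp_sym S) (sp_leg_chord S s1N tn).
  exact: (nonadj_x S) (leg_neq_y S s1N (leg_c _ _ tn)).
- rewrite place_b2 // place_c2 //.
  by apply: (legs_nonadj S s1N (s2N one) (s1_neq_s2 one)); leg_mem.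
have [pN pn _ _] := pairP nN ns.
rewrite place_pb // place_pc // tn; case tp: (t (p n));
  by apply: (legs_nonadj S pN nN pn); leg_mem.
Qed.

Lemma place_2placement u v : e u v -> ~~ e (place u) (place v).
Proof.
have sym := sp_sym S; have irr := sp_irr S.
have flip a1 a2 : ~~ e (place a2) (place a1) -> ~~ e (place a1) (place a2).
  by rewrite sym.
case: (sp_cover S u) => [->|->|[n nN un]] euv.
- by rewrite (sp_x_leaf S euv); exact: nonadj_place_xy.
- case: (sp_y_nbrs S euv) => [->|vN]; first exact: flip nonadj_place_xy.
  exact: nonadj_place_y_root.
case: (sp_leg_closed S nN un euv) => [vn|[-> ->]]; last exact: flip (nonadj_place_y_root nN).
move: euv; case: (legP un) => [->|->|[tn ->]]; case: (legP vn) => [->|->|[tn' ->]];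
  rewrite ?irr // => euv.
- exact: nonadj_place_root_b.
- by rewrite (negbTE (sp_leg_chord S nN tn')) in euv.
- exact: flip (nonadj_place_root_b nN).
- exact: nonadj_place_b_c.
- by rewrite sym (negbTE (sp_leg_chord S nN tn)) in euv.
- exact: flip (nonadj_place_b_c nN tn).
Qed.

(* Every vertex is moved to distance at most 4, which covers the bounds
   required for x, its neighbour y and the leaves. *)
Lemma near_via_centre i j u v :
  walkn e i u y -> walkn e j v y -> i + j <= 4 -> walkn e 4 u v.
Proof. by move=> wu wv le4; apply: walkn_mono le4 (walk_via_centre S wu wv). Qed.

Lemma near_edge u v : e u v -> walkn e 4 u v.
Proof. by move=> euv; apply: (walkn_mono (n := 1)) (walkn_edge euv). Qed.

Lemma place_near v : walkn e 4 v (place v).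
Proof.
have wr := walk_root S; have wb := walk_b S; have wc := walk_c S.
have wx := walk_x S; have wy := walkn0 e y.
case: (sp_cover S v) => [->|->|[n nN vn]].
- by rewrite place_x; apply: near_via_centre wx wy _.
- by rewrite place_y; apply: near_via_centre wy (wb _ s1N) _.
case: (legP vn) => [->|->|[tn ->]]; case: (leg_role n) => [n_s1|[one n_s2]|ns]; subst.
- rewrite place_s1; case: (boolP single) => [_|one].
    exact: near_via_centre (wr _ s1N) wx _.
  exact: near_via_centre (wr _ s1N) (wr _ (s2N one)) _.
- rewrite place_s2 //; case ts2: (t s2).
    exact: near_via_centre (wr _ (s2N one)) (wc _ _ ts2) _.
  exact: near_via_centre (wr _ (s2N one)) (wb _ (s2N one)) _.
- have [pN _ _ _] := pairP nN ns.
  rewrite place_root //; case tn: (t n); last case: (t (p n)).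
  + exact: near_via_centre (wr _ nN) (wc _ nN tn) _.
  + exact: near_via_centre (wr _ nN) (wb _ nN) _.
  + exact: near_via_centre (wr _ nN) (wb _ pN) _.
- rewrite place_b1 /close1; case ts1: (t s1); first exact: near_edge (sp_leg2 S s1N ts1).
  case: single; first exact: near_via_centre (wb _ s1N) (wr _ s1N) _.
  exact: near_via_centre (wb _ s1N) wx _.
- by rewrite place_b2 //; apply: near_via_centre (wb _ (s2N one)) (wr _ s1N) _.
- have [pN _ _ _] := pairP nN ns.
  rewrite place_pb //; case: (t n); case: (t (p n)).
  + exact: near_via_centre (wb _ nN) (wb _ pN) _.
  + exact: near_via_centre (wb _ nN) (wr _ pN) _.
  + exact: near_via_centre (wb _ nN) (wb _ pN) _.
  + exact: near_via_centre (wb _ nN) (wr _ nN) _.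
- rewrite place_c1 // /close1.
  case: single; first exact: near_via_centre (wc _ s1N tn) (wr _ s1N) _.
  exact: near_via_centre (wc _ s1N tn) wx _.
- by rewrite place_c2 //; apply: near_edge; rewrite (sp_sym S) (sp_leg2 S (s2N one) tn).
- by rewrite place_pc //; apply: near_via_centre (wc _ nN tn) (wr _ nN) _.
Qed.

Lemma place_no_fixpoint v : place v != v.
Proof.
have partner_neq n u w : n \in N -> ~~ special n -> u \in leg n -> w \in leg (p n) -> w != u.
  by move=> nN ns un wp; have [pN pn _ _] := pairP nN ns; exact: (legs_neq S pN nN pn wp un).
case: (sp_cover S v) => [->|->|[n nN vn]].
- by rewrite place_x eq_sym (x_neq_y S).
- by rewrite place_y; exact: (leg_neq_y S s1N (leg_b _ _ _ _)).
case: (legP vn) => [->|->|[tn ->]]; case: (leg_role n) => [n_s1|[one n_s2]|ns]; subst.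
- rewrite place_s1; case: (boolP single) => [_|one]; first by rewrite eq_sym (N_neq_x S s1N).
  exact: s2_neq_s1.
- rewrite place_s2 //; case ts2: (t s2); first exact: (sp_leg_c S (s2N one) ts2).
  exact: (b_neq_root S (s2N one)).
- rewrite place_root //; case tn: (t n); first exact: (sp_leg_c S nN tn).
  case: (t (p n)); first exact: (b_neq_root S nN).
  by apply: (partner_neq _ _ _ nN ns); leg_mem.
- rewrite place_b1 /close1; case ts1: (t s1); first exact: (c_neq_b S s1N ts1).
  case: single; first by rewrite eq_sym (b_neq_root S s1N).
  by rewrite eq_sym (leg_neq_x S s1N (leg_b _ _ _ _)).
- rewrite place_b2 //.
  by apply: (legs_neq S s1N (s2N one) (s1_neq_s2 one)); leg_mem.
- rewrite place_pb //; case: (t n); case: (t (p n));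
    try by apply: (partner_neq _ _ _ nN ns); leg_mem.
  by rewrite eq_sym (b_neq_root S nN).
- rewrite place_c1 // /close1; case: single; first by rewrite eq_sym (sp_leg_c S s1N tn).
  by rewrite eq_sym (leg_neq_x S s1N (leg_c _ _ tn)).
- by rewrite place_c2 // eq_sym (c_neq_b S (s2N one) tn).
- by rewrite place_pc // eq_sym (sp_leg_c S nN tn).
Qed.

(* Every vertex returns to itself after at most five steps; this yields both
   the injectivity of [place] and the bound on the cycle lengths. *)
Definition on_short_cycle v := exists2 k, 0 < k <= 5 & iter k place v = v.

Lemma short_cycle_place v : on_short_cycle v -> on_short_cycle (place v).
Proof. by case=> k k5 iterk; exists k => //; rewrite -iterSr iterS iterk. Qed.

Lemma short_cycle_x : on_short_cycle x.
Proof.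
rewrite /on_short_cycle /close1; case one: single; case ts1: (t s1).
- by exists 5; rewrite //= place_x place_y place_b1 ts1 place_c1 // /close1 one place_s1 one.
- by exists 4; rewrite //= place_x place_y place_b1 ts1 /close1 one place_s1 one.
- by exists 4; rewrite //= place_x place_y place_b1 ts1 place_c1 // /close1 one.
- by exists 3; rewrite //= place_x place_y place_b1 ts1 /close1 one.
Qed.

Lemma short_cycle_s1 : ~~ single -> on_short_cycle s1.
Proof.
move=> one; rewrite /on_short_cycle; case ts2: (t s2).
- by exists 4; rewrite //= place_s1 (negbTE one) place_s2 // ts2 place_c2 // place_b2.
- by exists 3; rewrite //= place_s1 (negbTE one) place_s2 // ts2 place_b2.
Qed.

Lemma short_cycle_pair n : n \in N -> ~~ special n ->
  on_short_cycle n /\ on_short_cycle (b n).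
Proof.
move=> nN ns; have [pN _ ppn pns] := pairP nN ns.
have place_p := place_root pN pns; have place_bp := place_pb pN pns.
rewrite ppn in place_p place_bp.
have [place_n place_bn] := (place_root nN ns, place_pb nN ns).
case tn: (t n); case tp: (t (p n)).
- split; first by exists 2; rewrite //= place_n tn place_pc.
  by exists 2; rewrite //= place_bn tn tp place_bp tp tn.
- split; first by exists 2; rewrite //= place_n tn place_pc.
  by exists 3; rewrite //= place_bn tn tp place_p tp tn place_bp tp tn.
- suff cn : on_short_cycle n.
    by split => //; move: (short_cycle_place cn); rewrite place_n tn tp.
  by exists 3; rewrite //= place_n tn tp place_bn tn tp place_bp tp tn.
- suff cn : on_short_cycle n.
    split => //; move: (short_cycle_place (short_cycle_place (short_cycle_place cn))).
    by rewrite place_n tn tp place_bp tp tn place_p tp tn.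
  by exists 4; rewrite //= place_n tn tp place_bp tp tn place_p tp tn place_bn tn tp.
Qed.

Lemma place_short_cycles v : on_short_cycle v.
Proof.
have cy : on_short_cycle y by move: (short_cycle_place short_cycle_x); rewrite place_x.
have cb1 : on_short_cycle (b s1) by move: (short_cycle_place cy); rewrite place_y.
have cs2 : ~~ single -> on_short_cycle s2.
  by move=> one; move: (short_cycle_place (short_cycle_s1 one)); rewrite place_s1 (negbTE one).
case: (sp_cover S v) => [->|->|[n nN vn]]; first exact: short_cycle_x; first exact: cy.
case: (legP vn) => [->|->|[tn ->]]; case: (leg_role n) => [n_s1|[one n_s2]|ns]; subst.
- case: (boolP single) => [one|]; last exact: short_cycle_s1.
  move: (short_cycle_place cb1); rewrite place_b1 /close1 one; case ts1: (t s1) => // cc.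
  by move: (short_cycle_place cc); rewrite place_c1 // /close1 one.
- exact: cs2.
- by case: (short_cycle_pair nN ns).
- exact: cb1.
- move: (short_cycle_place (cs2 one)); rewrite place_s2 //; case ts2: (t s2) => // cc.
  by move: (short_cycle_place cc); rewrite place_c2.
- by case: (short_cycle_pair nN ns).
- by move: (short_cycle_place cb1); rewrite place_b1 tn.
- by move: (short_cycle_place (cs2 one)); rewrite place_s2 // tn.
- have [cn _] := short_cycle_pair nN ns.
  by move: (short_cycle_place cn); rewrite place_root // tn.
Qed.

Lemma place_inj : injective place.
Proof.
have iter_mul k q u : iter k place u = u -> iter (q * k) place u = u.
  by move=> iterk; elim: q => [|q IH] //; rewrite mulSn iterD IH iterk.
move=> u v eq_uv.
have [k1 /andP[k1_gt0 _] iter_u] := place_short_cycles u.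
have [k2 /andP[k2_gt0 _] iter_v] := place_short_cycles v.
have k_pos : k2 * k1 = (k2 * k1).-1.+1 by rewrite prednK // muln_gt0 k1_gt0 k2_gt0.
have := iter_mul _ k2 _ iter_u; have := iter_mul _ k1 _ iter_v.
by rewrite [k1 * k2]mulnC k_pos !iterSr eq_uv => -> ->.
Qed.

Lemma spider_well_placement : exists s : {perm T}, well_two_placement e x s.
Proof.
exists (perm place_inj); split; [|split; [|split; [|split; [|split; [|split]]]]].
- by move=> v; rewrite permE; exact: place_no_fixpoint.
- by move=> u v euv; rewrite !permE; exact: place_2placement.
- move=> u v _; apply: dist_le_walk.
  exact: (walk_via_centre S (walk_centre S _) (walk_centre S _)).
- rewrite permE place_x; apply: dist_le_walk.
  exact: (walkn_mono (n := 1)) (walk_x S).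
- move=> w /(sp_x_leaf S) ->; rewrite permE place_y; apply: dist_le_walk.
  exact: (walkn_mono (n := 2)) (walkn_sym (sp_sym S) (walk_b S s1N)).
- by move=> w _; rewrite permE; apply: dist_le_walk; exact: place_near.
- move=> v; have [k /andP[k_gt0 k5] iterk] := place_short_cycles v.
  apply: leq_trans k5; apply: card_porbit_le => //.
  suff -> : iter k (perm place_inj) v = iter k place v by [].
  by elim: (k) => //= j ->; rewrite permE.
Qed.

End SpiderPlacement.

Lemma F_tree_leg (T : finType) (e : rel T) n y : symmetric e ->
  neighbor_F_tree e n y -> #|subtree e n y| != 1 ->
  exists bb cc (tt : bool),
   [/\ (if tt then [set n; bb; cc] else [set n; bb]) = subtree e n y, e n bb,
       (tt -> e bb cc), (tt -> ~~ e n cc) & (tt -> cc != n)].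
Proof.
move=> sym [s [us ssub hadj ss3 hend]] card1.
have ns : n \in s by rewrite ssub inE connect0.
have cs : #|subtree e n y| = size s by rewrite -(eq_card ssub); apply/card_uniqP.
rewrite cs {cs} in card1.
case: s us ssub hadj ss3 hend ns card1 => [|u [|v [|w [|z s]]]] //= us ssub hadj _ hend ns _.
- move: us; rewrite /= inE andbT => uv.
  have euv : e u v by rewrite hadj ?inE ?eqxx ?orbT // /adj_in /= inE eqxx.
  move: ns; rewrite !inE => /orP[]/eqP nE; subst n.
  + by exists v, u, false; split => //; apply/setP => z; rewrite -ssub !inE.
  + exists u, u, false; split => //; last by rewrite sym.
    by apply/setP => z; rewrite -ssub !inE orbC.
- move: us; rewrite /= !inE !negb_or andbT => /andP[/andP[uv uw] vw].
  have euv : e u v by rewrite hadj ?inE ?eqxx ?orbT // /adj_in /= !inE eqxx.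
  have evw : e v w by rewrite hadj ?inE ?eqxx ?orbT // /adj_in /= !inE eqxx ?orbT.
  have nuw : ~~ e u w.
    rewrite hadj ?inE ?eqxx ?orbT // /adj_in /= !inE !xpair_eqE.
    by rewrite !eqxx /= (eq_sym w v) (negbTE vw) (negbTE uv) (eq_sym w u) (negbTE uw).
  case: (hend erefl) => /= nE; subst n.
  + exists v, w, true; split=> // [|_]; last by rewrite eq_sym.
    by apply/setP => z; rewrite -ssub !inE -orbA.
  + exists v, u, true; split=> [||_|_|_] //; try by rewrite sym.
    apply/setP => z; rewrite -ssub !inE.
    by case: (z == u); case: (z == v); case: (z == w).
Qed.

Lemma remove_edge_sym (T : finType) (e : rel T) a b :
  symmetric e -> symmetric (remove_edge e a b).
Proof. by move=> sym u v; rewrite /remove_edge sym orbC (andbC (u == b)) (andbC (u == a)). Qed.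

Section TreeToSpider.
Variables (T : finType) (e : rel T) (x y : T).
Hypothesis tree : is_tree e.
Hypothesis exy : e x y.
Hypothesis x_leaf : deg e x = 1.
Hypothesis y_deg : 3 <= deg e y.
Hypothesis F_legs : forall y', e y y' -> y' != x ->
  neighbor_F_tree e y' y /\ #|subtree e y' y| != 1.

Let sym : symmetric e. Proof. by case: tree => [[]]. Qed.
Let irr : irreflexive e. Proof. by case: tree => [[]]. Qed.

Let xy : x != y. Proof. by apply: contraTneq exy => ->; rewrite irr. Qed.

Let N := [set z | e y z & z != x].
Local Notation sub n := (subtree e n y).

Lemma x_nbr_y w : e x w -> w = y.
Proof.
move=> exw; move/eqP/cards1P: x_leaf => [z xz].
have : y \in [set z | e x z] by rewrite inE.
have : w \in [set z | e x z] by rewrite inE.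
by rewrite xz !inE => /eqP-> /eqP->.
Qed.

Lemma nbrs_card : 1 < #|N|.
Proof.
move: y_deg; rewrite /deg (cardsD1 x) inE sym exy.
by have -> : [set z | e y z] :\ x = N by apply/setP => z; rewrite !inE andbC.
Qed.

Lemma nbrP n : n \in N -> e y n /\ n != x. Proof. by rewrite inE => /andP. Qed.
Lemma nbr_neq_y n : n \in N -> n != y.
Proof. by case/nbrP => eyn _; apply: contraTneq eyn => ->; rewrite irr. Qed.

Lemma subtree_step n u w : u \in sub n -> remove_edge e n y u w -> w \in sub n.
Proof. by rewrite !inE => nu uw; apply: connect_trans nu (connect1 uw). Qed.

Lemma subtree_card n : n \in N -> #|sub n| <= 3.
Proof.
case/nbrP => eyn nx; have [[s [us ssub _ ss3 _]] _] := F_legs eyn nx.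
by rewrite -(eq_card ssub); move/card_uniqP: us => ->.
Qed.

(* y is not in T_(n,y): otherwise T_(n,y) would contain y, x, n and a second
   neighbour of y, more than three vertices. *)
Lemma y_notin_subtree n : n \in N -> y \notin sub n.
Proof.
move=> nN; apply/negP => ys; have [eyn nx] := nbrP nN.
have : 0 < #|N :\ n| by move: nbrs_card; rewrite (cardsD1 n) nN.
case/card_gt0P => n' /setD1P[n'n n'N]; have [eyn' n'x] := nbrP n'N.
have ny := nbr_neq_y nN.
have xs : x \in sub n.
  apply: subtree_step ys _; rewrite /remove_edge sym exy /= eqxx.
  by rewrite (eq_sym y n) (negbTE ny) (eq_sym x n) (negbTE nx).
have n's : n' \in sub n.
  apply: subtree_step ys _; rewrite /remove_edge eyn' /= eqxx.
  by rewrite (eq_sym y n) (negbTE ny) (negbTE n'n).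
have uniq4 : uniq [:: y; x; n; n'].
  rewrite /= !inE !negb_or eq_sym xy eq_sym ny eq_sym (nbr_neq_y n'N) eq_sym nx.
  by rewrite eq_sym n'x eq_sym n'n.
have sub4 : {subset [:: y; x; n; n'] <= enum (sub n)}.
  move=> z; rewrite mem_enum !in_cons in_nil orbF => /or4P[]/eqP-> //.
  by rewrite inE connect0.
by have := leq_trans (uniq_leq_size uniq4 sub4); rewrite -cardE => /(_ _ (subtree_card nN)).
Qed.

Lemma subtree_edge n u w : n \in N -> u \in sub n -> e u w -> w != y -> w \in sub n.
Proof.
move=> nN un euw wy; apply: (subtree_step un); rewrite /remove_edge euw (negbTE wy) andbF /=.
by apply: contraNN (y_notin_subtree nN) => /andP[/eqP uy _]; move: un; rewrite uy.
Qed.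

Lemma subtree_to_y n u : n \in N -> u \in sub n -> e u y -> u = n.
Proof.
move=> nN un euy; apply/eqP; apply: contraNT (y_notin_subtree nN) => u_n.
apply: (subtree_step un); rewrite /remove_edge euy (negbTE u_n) /=.
by apply: contraNN (y_notin_subtree nN) => /andP[/eqP uy _]; move: un; rewrite uy.
Qed.

Lemma x_notin_subtree n : n \in N -> x \notin sub n.
Proof.
move=> nN; have [_ nx] := nbrP nN; apply: contraNN (y_notin_subtree nN) => xs.
apply: (subtree_step xs); rewrite /remove_edge exy (eq_sym x n) (negbTE nx).
by rewrite (negbTE xy).
Qed.

Lemma subtree_path n m pth u : n \in N -> m \in N -> u \in sub n -> u \in sub m ->
  path (remove_edge e m y) u pth -> last u pth \in sub n.
Proof.
move=> nN mN; elim: pth u => [|z pth IH] u //= un um /andP[uz zpth].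
have zm : z \in sub m := subtree_step um uz.
apply: IH zpth => //; move/andP: uz => [euz _]; apply: subtree_edge un euz _ => //.
by apply: contraNneq (y_notin_subtree mN) => zy; move: zm; rewrite zy.
Qed.

Lemma subtree_disjoint n m v : n \in N -> m \in N -> v \in sub n -> v \in sub m -> n = m.
Proof.
move=> nN mN vn vm; apply: esym; apply: (subtree_to_y nN); last by rewrite sym; case/nbrP: mN.
have : connect (remove_edge e m y) v m.
  by rewrite (sym_connect_sym (remove_edge_sym _ _ sym)); rewrite inE in vm.
by case/connectP => pth vpth ->; exact: subtree_path vpth.
Qed.

(* Every vertex is x, y, or in some T_(n,y): the set of such vertices is
   closed under adjacency and contains y. *)
Lemma subtree_cover v : [\/ v = x, v = y | exists2 n, n \in N & v \in sub n].
Proof.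
pose U v := [|| v == x, v == y | [exists n, (n \in N) && (v \in sub n)]].
have U_step u w : U u -> e u w -> U w.
  rewrite /U => /or3P[/eqP->|/eqP->|/existsP[n /andP[nN un]]] euw.
  - by rewrite (x_nbr_y euw) eqxx orbT.
  - have [->|wx] := eqVneq w x; first by [].
    apply/or3P; constructor 3; apply/existsP; exists w.
    by rewrite !inE euw wx connect0.
  - have [->|wy] := eqVneq w y; first by rewrite orbT.
    by apply/or3P; constructor 3; apply/existsP; exists n; rewrite nN (subtree_edge nN un euw wy).
have U_path pth u : U u -> path e u pth -> U (last u pth).
  elim: pth u => [|z pth IH] u //= Uu /andP[uz zpth].
  exact: IH (U_step _ _ Uu uz) zpth.
have : U v.
  case: tree => _ /(_ y v) /connectP[pth ypth ->] _.
  by apply: U_path ypth; rewrite /U eqxx orbT.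
case/or3P => [/eqP->|/eqP->|/existsP[n /andP[nN vn]]]; [by constructor 1|by constructor 2|].
by constructor 3; exists n.
Qed.

Lemma spider_of_tree :
  exists (N : {set T}) b c t, 1 < #|N| /\ Spider e x y N b c t.
Proof.
have legs n : exists bct : T * T * bool, n \in N ->
   [/\ (if bct.2 then [set n; bct.1.1; bct.1.2] else [set n; bct.1.1]) = sub n,
       e n bct.1.1, (bct.2 -> e bct.1.1 bct.1.2), (bct.2 -> ~~ e n bct.1.2)
     & (bct.2 -> bct.1.2 != n)].
  have [nN|_] := boolP (n \in N); last by exists (n, n, false).
  have [eyn nx] := nbrP nN; have [F C] := F_legs eyn nx.
  by have [bb [cc [tt leg_n]]] := F_tree_leg sym F C; exists (bb, cc, tt).
have [F legF] := fin_all_exists legs.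
pose b n := (F n).1.1; pose c n := (F n).1.2; pose t n := (F n).2.
have legE n : n \in N -> leg b c t n = sub n by move=> nN; case: (legF n nN).
exists N, b, c, t; split; first exact: nbrs_card.
split => //.
- by rewrite inE eqxx andbF.
- by move=> n /nbrP[].
- exact: x_nbr_y.
- by move=> w ew; have [->|wx] := eqVneq w x; [left|right; rewrite inE ew wx].
- by move=> n nN; case: (legF n nN).
- by move=> n nN; case: (legF n nN).
- by move=> n nN; case: (legF n nN).
- by move=> n nN; case: (legF n nN).
- by move=> n nN; rewrite legE //; exact: x_notin_subtree.
- by move=> n nN; rewrite legE //; exact: y_notin_subtree.
- by move=> n m v nN mN; rewrite !legE //; exact: subtree_disjoint.
- move=> n u w nN; rewrite legE // => un euw.
  have [w_y|wy] := eqVneq w y; last by left; exact: subtree_edge un euw wy.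
  by right; split => //; apply: subtree_to_y nN un _; rewrite -w_y.
- move=> v; case: (subtree_cover v) => [->|->|[n nN vn]]; [constructor 1|constructor 2|] => //.
  by constructor 3; exists n; rewrite ?legE.
Qed.

End TreeToSpider.

(* Lemma 3.8. *)
Theorem lemma3p8 (T : finType) (e : rel T) (x y : T) :
  is_tree e -> ~ is_star e ->
  e x y -> deg e x = 1 -> 3 <= deg e y ->
  (forall y', e y y' -> y' != x ->
     neighbor_F_tree e y' y /\ #|subtree e y' y| != 1) ->
  exists s : {perm T}, well_two_placement e x s.
Proof.
move=> tree _ exy x_leaf y_deg F_legs.
have [N [b [c [t [N_gt1 S]]]]] := spider_of_tree tree exy x_leaf y_deg F_legs.
have [single [s1 [s2 [p [s1N s2P pairP]]]]] := special_pairing N_gt1.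
exact: (spider_well_placement S s1N s2P pairP).
Qed.
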